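(* Let $C$ be a countable torsion abelian group and $A$ a countable abelian group with torsion subgroup $tA$. Then $\mathrm{PExt}(C,tA)$ and $\mathrm{PExt}(C,A)$ are Borel-definably isomorphic.
   Context: For countable $C,A$: $\mathsf Z(C,A)$ is the Polish group (closed in $A^{C\times C}$) of normalized symmetric 2-cocycles ($c(x,0)=0$, $c(x,y)=c(y,x)$, $c(y,z)-c(x+y,z)+c(x,y+z)-c(x,y)=0$), $\mathsf B(C,A)$ the subgroup of coboundaries $c(x,y)=\phi(y)-\phi(x+y)+\phi(x)$, $\mathsf B_{\mathrm w}(C,A)$ the subgroup of cocycles whose restriction to $S\times S$ is a coboundary for every finite $S\le C$; $\mathrm{PExt}(C,A)=\mathsf B_{\mathrm w}(C,A)/\mathsf B(C,A)$, a group with a Polish cover (Polish group modulo Polishable subgroup). A homomorphism between groups with a Polish cover $\hat G/N\to\hat H/M$ is Borel-definable if it is induced by a Borel function $\hat G\to\hat H$; a Borel-definable isomorphism is a bijective Borel-definable homomorphism. *)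

From HB Require Import structures.
From mathcomp Require Import all_boot all_order all_algebra.
From mathcomp Require Import boolp classical_sets.
From mathcomp Require Import measure.
Set Implicit Arguments. Unset Strict Implicit. Unset Printing Implicit Defensive.
Import GRing.Theory.
Local Open Scope ring_scope.
Local Open Scope classical_set_scope.

Definition is_torsion (A : zmodType) (a : A) : Prop :=
  exists n : nat, (0 < n)%N /\ a *+ n = 0.

Definition torsion_group (C : zmodType) : Prop := forall c : C, is_torsion c.

Definition torsion_pred (A : zmodType) : {pred A} := fun a => `[< is_torsion a >].
Arguments torsion_pred : clear implicits.

Lemma torsion_zmod_closed (A : zmodType) : zmod_closed (torsion_pred A).
Proof.
split.
  by apply/asboolP; exists 1%N; split => //; rewrite mulr1n.
move=> a b /asboolP[n [n0 an]] /asboolP[m [m0 bm]]; apply/asboolP.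
exists (n * m)%N; split; first by rewrite muln_gt0 n0 m0.
by rewrite mulrnBl mulrnA an mul0rn mulnC mulrnA bm mul0rn subr0.
Qed.

HB.instance Definition _ (A : zmodType) :=
  GRing.isZmodClosed.Build A (torsion_pred A) (torsion_zmod_closed A).

Definition tors (A : countZmodType) := {a : A | a \in torsion_pred A}.
HB.instance Definition _ (A : countZmodType) := SubType.on (tors A).
HB.instance Definition _ (A : countZmodType) := Countable.on (tors A).
HB.instance Definition _ (A : countZmodType) :=
  [SubChoice_isSubZmodule of tors A by <:].

Section Cocycles.
Variables (C A : zmodType).
Implicit Types (c d : C -> C -> A).

Definition cadd c d : C -> C -> A := fun x y => c x y + d x y.
Definition csub c d : C -> C -> A := fun x y => c x y - d x y.

Definition is_cocycle c : Prop :=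
  [/\ forall x, c x 0 = 0,
      forall x y, c x y = c y x &
      forall x y z, c y z - c (x + y) z + c x (y + z) - c x y = 0].

Definition is_coboundary c : Prop :=
  is_cocycle c /\
  exists phi : C -> A, forall x y, c x y = phi y - phi (x + y) + phi x.

Definition finite_subgroup (S : seq C) : Prop :=
  0 \in S /\ forall x y, x \in S -> y \in S -> x - y \in S.

Definition is_weak_coboundary c : Prop :=
  is_cocycle c /\
  forall S : seq C, finite_subgroup S ->
    exists phi : C -> A, forall x y, x \in S -> y \in S ->
      c x y = phi y - phi (x + y) + phi x.
End Cocycles.

(* The product topology of discrete countable spaces; its Borel sigma-algebra
   is generated by the cylinder sets {c | c x y = a}. *)
Definition cylinders (C X : Type) : set (set (C -> C -> X)) :=
  [set B | exists x y (a : X), B = [set c | c x y = a]].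
Arguments cylinders : clear implicits.

Definition borel_set (C X : Type) (B : set (C -> C -> X)) : Prop :=
  <<s cylinders C X >> B.

Definition borel_map (C X Y : Type) (F : (C -> C -> X) -> (C -> C -> Y)) : Prop :=
  forall B, borel_set B -> borel_set (F @^-1` B).

(* PExt(C,A) = B_w(C,A) / B(C,A).  A Borel-definable isomorphism
   PExt(C,X) -> PExt(C,Y) is given by a Borel lift
   F : B_w(C,X) -> B_w(C,Y) (extended to the ambient Polish space) inducing
   a well-defined bijective group homomorphism on the quotients. *)
Definition PExt_borel_iso (C X Y : zmodType)
    (F : (C -> C -> X) -> (C -> C -> Y)) : Prop :=
  borel_map F /\
  [/\ forall c, is_weak_coboundary c -> is_weak_coboundary (F c),
      forall c d, is_weak_coboundary c -> is_weak_coboundary d ->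
        is_coboundary (csub c d) -> is_coboundary (csub (F c) (F d)),
      forall c d, is_weak_coboundary c -> is_weak_coboundary d ->
        is_coboundary (csub (F (cadd c d)) (cadd (F c) (F d))),
      forall c d, is_weak_coboundary c -> is_weak_coboundary d ->
        is_coboundary (csub (F c) (F d)) -> is_coboundary (csub c d) &
      forall e, is_weak_coboundary e ->
        exists c, is_weak_coboundary c /\ is_coboundary (csub (F c) e)].

Definition PExt_borel_isomorphic (C X Y : zmodType) : Prop :=
  exists F : (C -> C -> X) -> (C -> C -> Y), PExt_borel_iso F.

From HB Require Import structures.
From mathcomp Require Import all_boot all_order all_algebra.
From mathcomp Require Import boolp classical_sets measure.

(* The isomorphism PExt(C,tA) -> PExt(C,A) is induced by composing cochains
   with the inclusion tA -> A.  The key observation is that, C being torsion, a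
   cochain phi : C -> A whose coboundary is torsion-valued on a cyclic subgroup
   <x> has phi(x) torsion: phi(kx) - k phi(x) is torsion for every k, and kx = 0
   when k is the order of x.  Hence an A-valued primitive of a tA-valued
   coboundary is tA-valued, which gives injectivity.  For surjectivity, a weak
   coboundary e has a primitive psi_x on each cyclic subgroup <x>; primitives
   of e on a common finite subgroup differ by torsion, so for phi(x) := psi_x(x)
   the cocycle e - cobound phi takes values in tA. *)

Set Implicit Arguments. Unset Strict Implicit. Unset Printing Implicit Defensive.
Import GRing.Theory.
Local Open Scope ring_scope.

Lemma subrACA (V : zmodType) (a b c d : V) : (a - b) - (c - d) = (a - c) - (b - d).
Proof. by rewrite !opprD !opprK addrACA. Qed.

Section Cochains.
Variables (C A : zmodType).
Implicit Types (phi psi : C -> A) (c d : C -> C -> A).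

Definition cobound phi : C -> C -> A := fun x y => phi y - phi (x + y) + phi x.

Lemma coboundE phi x y : cobound phi x y = phi x + phi y - phi (x + y).
Proof. by rewrite /cobound addrAC (addrC (phi y)). Qed.

Lemma cobound00 phi : cobound phi 0 0 = phi 0.
Proof. by rewrite /cobound addr0 subrr add0r. Qed.

Lemma coboundC phi x y : cobound phi x y = cobound phi y x.
Proof. by rewrite !coboundE (addrC (phi x)) (addrC y). Qed.

Lemma coboundB phi psi :
  cobound (fun u => phi u - psi u) = csub (cobound phi) (cobound psi).
Proof.
by do 2!apply: funext => ?; rewrite /cobound subrACA addrACA -opprD.
Qed.

Lemma coboundN phi : cobound (fun u => - phi u) = csub (fun _ _ => 0) (cobound phi).
Proof. by do 2!apply: funext => ?; rewrite /csub /cobound sub0r !opprD !opprK. Qed.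

Lemma cobound_chain phi x y z :
  cobound phi x y + cobound phi (x + y) z = phi x + phi y + phi z - phi (x + y + z).
Proof. by rewrite !coboundE -(addrA (phi (x + y))) subrKA addrA. Qed.

Lemma cobound_cocycle phi : phi 0 = 0 -> is_cocycle (cobound phi).
Proof.
move=> phi0; split=> [x | x y | x y z]; first by rewrite /cobound addr0 phi0 sub0r addNr.
  exact: coboundC.
have assoc : cobound phi x (y + z) + cobound phi y z =
             cobound phi x y + cobound phi (x + y) z.
  rewrite coboundC addrC !cobound_chain.
  by rewrite -(addrA (phi x)) (addrC (phi x)) -(addrA x) (addrC x).
apply/eqP; rewrite (addrAC (cobound phi y z)) subr_eq0 subr_eq.
by rewrite (addrC (cobound phi y z)) assoc.
Qed.

Lemma cocycleB c d : is_cocycle c -> is_cocycle d -> is_cocycle (csub c d).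
Proof.
move=> [c0 cC cA] [d0 dC dA]; split=> [x | x y | x y z]; rewrite /csub.
- by rewrite c0 d0 subrr.
- by rewrite cC dC.
- by rewrite subrACA addrACA -opprD subrACA cA dA subrr.
Qed.

Lemma is_coboundaryP c : is_coboundary c <-> exists2 phi, phi 0 = 0 & c = cobound phi.
Proof.
split=> [[[c0 _ _] [phi cE]] | [phi phi0 ->]].
  exists phi; first by rewrite -cobound00 /cobound -cE c0.
  by do 2!apply: funext => ?; apply: cE.
by split; [exact: cobound_cocycle | exists phi].
Qed.

Lemma coboundary_csubxx c : is_coboundary (csub c c).
Proof.
apply/is_coboundaryP; exists (fun _ => 0) => //.
by do 2!apply: funext => ?; rewrite /csub /cobound !subrr addr0.
Qed.

Lemma coboundary_weak c : is_coboundary c -> is_weak_coboundary c.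
Proof. by move=> [cC [phi cE]]; split=> // S _; exists phi => x y _ _; apply: cE. Qed.

Lemma weak_coboundaryB c d :
  is_weak_coboundary c -> is_weak_coboundary d -> is_weak_coboundary (csub c d).
Proof.
move=> [cC cW] [dC dW]; split=> [|S SG]; first exact: cocycleB.
have [[phi cE] [psi dE]] := (cW S SG, dW S SG).
exists (fun u => phi u - psi u) => x y xS yS.
change (csub c d x y = cobound (fun u => phi u - psi u) x y).
by rewrite coboundB /csub cE ?dE.
Qed.

End Cochains.

Section FiniteSubgroups.
Variable C : zmodType.

Lemma finite_subgroupD (S : seq C) u v :
  finite_subgroup S -> u \in S -> v \in S -> u + v \in S.
Proof.
move=> [S0 SB] uS vS; have := SB _ _ uS (SB _ _ S0 vS).
by rewrite sub0r opprK.
Qed.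

Lemma finite_subgroupMn (S : seq C) u k :
  finite_subgroup S -> u \in S -> u *+ k \in S.
Proof.
move=> SG uS; elim: k => [|k IHk]; first by rewrite mulr0n; case: SG.
by rewrite mulrSr finite_subgroupD.
Qed.

Lemma mulrn_modn (x : C) n i : x *+ n = 0 -> x *+ i = x *+ (i %% n).
Proof. by move=> xn; rewrite {1}(divn_eq i n) mulrnDr mulnC mulrnA xn mul0rn add0r. Qed.

Lemma oppr_mulrn (x : C) n i : (0 < n)%N -> x *+ n = 0 -> - (x *+ i) = x *+ (i * n.-1).
Proof.
move=> n_gt0 xn; apply/eqP; rewrite eq_sym -subr_eq0 opprK -mulrnDr.
by rewrite -mulnSr prednK // mulnC mulrnA xn mul0rn.
Qed.

Lemma finite_subgroup_span2 (x y : C) : is_torsion x -> is_torsion y ->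
  exists2 S, finite_subgroup S & forall i j, x *+ i + y *+ j \in S.
Proof.
move=> [n [n_gt0 xn]] [m [m_gt0 ym]].
pose S := [seq x *+ i + y *+ j | i <- iota 0 n, j <- iota 0 m].
have inS i j : x *+ i + y *+ j \in S.
  rewrite (mulrn_modn i xn) (mulrn_modn j ym).
  by apply: allpairs_f; rewrite mem_iota add0n ltn_pmod.
exists S => //; split; first by have := inS 0%N 0%N; rewrite !mulr0n addr0.
move=> _ _ /allpairsP[[i j] [_ _ ->]] /allpairsP[[i' j'] [_ _ ->]] /=.
rewrite opprD (oppr_mulrn i' n_gt0 xn) (oppr_mulrn j' m_gt0 ym).
by rewrite addrACA -!mulrnDr.
Qed.

End FiniteSubgroups.

Section Torsion.
Variables (C A : zmodType).
Local Notation tA := (torsion_pred A).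

Lemma mulrn_torsion (a : A) n : (0 < n)%N -> a *+ n \in tA -> a \in tA.
Proof.
move=> n_gt0 /asboolP[m [m_gt0 anm]]; apply/asboolP.
by exists (n * m)%N; rewrite muln_gt0 n_gt0 m_gt0 mulrnA.
Qed.

Lemma torsion_from_cobound (chi : C -> A) x : is_torsion x ->
  (forall k l, cobound chi (x *+ k) (x *+ l) \in tA) -> chi x \in tA.
Proof.
move=> [n [n_gt0 xn]] chiT.
have chi0 : chi 0 \in tA by have := chiT 0%N 0%N; rewrite mulr0n cobound00.
have chiMn k : chi (x *+ k) - chi x *+ k \in tA.
  elim: k => [|k IHk]; first by rewrite !mulr0n subr0.
  have -> : chi (x *+ k.+1) = chi (x *+ k) + chi x - cobound chi (x *+ k) x.
    by rewrite coboundE subKr mulrSr.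
  rewrite mulrSr (addrAC (chi (x *+ k))) (addrC (chi x *+ k)) addrKA.
  by rewrite (addrAC (chi (x *+ k))) rpredB //; have := chiT k 1%N; rewrite mulr1n.
apply: (mulrn_torsion n_gt0).
by rewrite -(subKr (chi 0) (chi x *+ n)) rpredB // -xn.
Qed.

End Torsion.

Section WeakCoboundaries.
Variables (C A : zmodType).
Hypothesis C_torsion : torsion_group C.
Local Notation tA := (torsion_pred A).

Lemma cobound_eq_torsion (phi psi : C -> A) x : is_torsion x ->
  (forall k l, cobound phi (x *+ k) (x *+ l) = cobound psi (x *+ k) (x *+ l)) ->
  phi x - psi x \in tA.
Proof.
move=> xT phipsi; apply: (torsion_from_cobound (chi := fun u => phi u - psi u) xT).
by move=> k l; rewrite coboundB /csub phipsi subrr rpred0.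
Qed.

Lemma weak_coboundary_torsion_primitive (e : C -> C -> A) : is_weak_coboundary e ->
  exists2 phi : C -> A, phi 0 = 0 & forall x y, e x y - cobound phi x y \in tA.
Proof.
move=> [[e0 _ _] eW].
have cyclic_primitive w : exists psi : C -> A,
    forall k l, e (w *+ k) (w *+ l) = cobound psi (w *+ k) (w *+ l).
  have [S SG inS] := finite_subgroup_span2 (C_torsion w) (C_torsion 0).
  have [psi epsi] := eW S SG; exists psi => k l.
  by apply: epsi; [have := inS k 0%N | have := inS l 0%N]; rewrite mulr0n addr0.
have [Psi ePsi] := choice cyclic_primitive.
exists (fun w => Psi w w).
  by have := ePsi 0 0%N 0%N; rewrite mulr0n cobound00 e0.
move=> x y; have [S SG inS] := finite_subgroup_span2 (C_torsion x) (C_torsion y).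
have [psi epsi] := eW S SG.
have primitives_agree w :
    (exists i j, w = x *+ i + y *+ j) -> psi w - Psi w w \in tA.
  move=> [i [j ->]]; apply: cobound_eq_torsion; first exact: C_torsion.
  move=> k l; rewrite -ePsi; symmetry; apply: epsi;
  by rewrite mulrnDl -!mulrnA inS.
have xS : x \in S by have := inS 1%N 0%N; rewrite mulr1n mulr0n addr0.
have yS : y \in S by have := inS 0%N 1%N; rewrite mulr1n mulr0n add0r.
have -> : e x y = cobound psi x y by exact: epsi.
change (csub (cobound psi) (cobound (fun w => Psi w w)) x y \in tA).
rewrite -coboundB /cobound.
apply: rpredD; first apply: rpredB; apply: primitives_agree.
- by exists 0%N, 1%N; rewrite mulr0n mulr1n add0r.
- by exists 1%N, 1%N; rewrite !mulr1n.
- by exists 1%N, 0%N; rewrite mulr1n mulr0n addr0.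
Qed.

End WeakCoboundaries.

Definition cochain_map (C X Y : Type) (f : X -> Y) (c : C -> C -> X) : C -> C -> Y :=
  fun x y => f (c x y).

Section AdditiveCochainMap.
Variables (C X Y : zmodType) (f : {additive X -> Y}).
Implicit Types (c d : C -> C -> X).
Local Notation F := (cochain_map f).

Lemma cochain_mapB c d : F (csub c d) = csub (F c) (F d).
Proof. by do 2!apply: funext => ?; exact: raddfB. Qed.

Lemma cochain_mapD c d : F (cadd c d) = cadd (F c) (F d).
Proof. by do 2!apply: funext => ?; exact: raddfD. Qed.

Lemma cochain_map_cobound (phi : C -> X) : F (cobound phi) = cobound (f \o phi).
Proof. by do 2!apply: funext => ?; rewrite /cochain_map /cobound raddfD raddfB. Qed.

Lemma cocycle_map c : is_cocycle c -> is_cocycle (F c).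
Proof.
move=> [c0 cC cA]; split=> [x | x y | x y z]; rewrite /cochain_map.
- by rewrite c0 raddf0.
- by rewrite cC.
- by rewrite -!raddfB -raddfD -raddfB cA raddf0.
Qed.

Lemma cocycle_map_inj c : injective f -> is_cocycle (F c) -> is_cocycle c.
Proof.
move=> f_inj [c0 cC cA]; split=> [x | x y | x y z]; apply: f_inj.
- by rewrite raddf0; apply: c0.
- exact: cC.
- by rewrite raddf0 !raddfB raddfD raddfB; apply: cA.
Qed.

Lemma coboundary_map c : is_coboundary c -> is_coboundary (F c).
Proof.
move=> /is_coboundaryP[phi phi0 ->]; apply/is_coboundaryP.
by exists (f \o phi); rewrite ?cochain_map_cobound //= phi0 raddf0.
Qed.

Lemma weak_coboundary_map c : is_weak_coboundary c -> is_weak_coboundary (F c).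
Proof.
move=> [cC cW]; split=> [|S SG]; first exact: cocycle_map.
have [phi cE] := cW S SG; exists (f \o phi) => x y xS yS.
by rewrite /cochain_map cE // raddfD raddfB.
Qed.

End AdditiveCochainMap.

Section Borel.
Local Open Scope classical_set_scope.

Lemma borel_mapP (C X Y : Type) (F : (C -> C -> X) -> C -> C -> Y) :
  (forall x y a, borel_set (F @^-1` [set c | c x y = a])) -> borel_map F.
Proof.
move=> Fcyl B BB.
suff : image_set_system setT F (@borel_set C X) B.
  by rewrite /image_set_system /= setTI.
apply: smallest_sub BB; first exact/sigma_algebra_image/smallest_sigma_algebra.
by move=> _ [x [y [a ->]]]; rewrite /image_set_system /= setTI; apply: Fcyl.
Qed.

Lemma borel_cochain_map (C X Y : Type) (f : X -> Y) :
  injective f -> borel_map (@cochain_map C X Y f).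
Proof.
move=> f_inj; apply: borel_mapP => x y a.
have [[b <-] | not_im] := pselect (exists b, f b = a).
  have -> : cochain_map f @^-1` [set c | c x y = f b] = [set c | c x y = b].
    by apply/seteqP; split=> c; rewrite /cochain_map /=; [move/f_inj | move->].
  by apply: sub_sigma_algebra; exists x, y, b.
have -> : cochain_map f @^-1` [set c | c x y = a] = set0.
  by apply/seteqP; split=> c //= cxy; apply: not_im; exists (c x y).
exact: sigma_algebra0.
Qed.

End Borel.

Section TorsionInclusion.
Variables (C : zmodType) (A : countZmodType).
Hypothesis C_torsion : torsion_group C.
Local Notation tA := (torsion_pred A).
Local Notation incl := (@cochain_map C (tors A) A val).

Lemma cobound_insubd (c : tors A) (phi : C -> A) x y :
  phi x \in tA -> phi y \in tA -> phi (x + y) \in tA ->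
  val c = cobound phi x y -> c = cobound (insubd 0 \o phi) x y.
Proof.
by move=> ? ? ? cE; apply: val_inj; rewrite cE /cobound raddfD raddfB /= !insubdK.
Qed.

Lemma coboundary_incl_inj (c : C -> C -> tors A) :
  is_coboundary (incl c) -> is_coboundary c.
Proof.
move=> /is_coboundaryP[phi phi0 cE].
have phiT u : phi u \in tA.
  by apply: torsion_from_cobound (C_torsion u) _ => k l; rewrite -cE; apply: valP.
apply/is_coboundaryP; exists (insubd 0 \o phi).
  by apply: val_inj; rewrite /= insubdK // phi0 raddf0.
by do 2!apply: funext => ?; apply: cobound_insubd => //; rewrite -cE.
Qed.

Lemma weak_coboundary_incl_inj (c : C -> C -> tors A) :
  is_weak_coboundary (incl c) -> is_weak_coboundary c.
Proof.
move=> [cC cW]; split=> [|S SG]; first exact: cocycle_map_inj val_inj cC.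
have [psi cE] := cW S SG.
have psiT u : u \in S -> psi u \in tA.
  move=> uS; apply: torsion_from_cobound (C_torsion u) _ => k l.
  by rewrite /cobound -cE ?finite_subgroupMn //; apply: valP.
exists (insubd 0 \o psi) => x y xS yS.
by apply: cobound_insubd; rewrite ?psiT ?finite_subgroupD //; apply: cE.
Qed.

Lemma weak_coboundary_incl_surj (e : C -> C -> A) : is_weak_coboundary e ->
  exists c, is_weak_coboundary c /\ is_coboundary (csub (incl c) e).
Proof.
move=> eW; have [phi phi0 ephiT] := weak_coboundary_torsion_primitive C_torsion eW.
pose c x y : tors A := insubd 0 (e x y - cobound phi x y).
have cE : incl c = csub e (cobound phi).
  by do 2!apply: funext => ?; rewrite /cochain_map insubdK.
exists c; split.
  apply: weak_coboundary_incl_inj; rewrite cE; apply: weak_coboundaryB => //.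
  by apply/coboundary_weak/is_coboundaryP; exists phi.
rewrite cE; apply/is_coboundaryP; exists (fun u => - phi u); first by rewrite phi0 oppr0.
by rewrite coboundN; do 2!apply: funext => ?; rewrite /csub addrAC subrr.
Qed.

End TorsionInclusion.

Theorem lemma4p4 (C A : countZmodType) (HC : torsion_group C) :
  PExt_borel_isomorphic C (tors A) A.
Proof.
exists (cochain_map val); split; first exact: borel_cochain_map val_inj.
split=> [c | c d _ _ | c d _ _ | c d _ _ | e eW].
- exact: weak_coboundary_map.
- by rewrite -cochain_mapB; apply: coboundary_map.
- by rewrite cochain_mapD; apply: coboundary_csubxx.
- by rewrite -cochain_mapB; apply: (coboundary_incl_inj HC).
- exact: (weak_coboundary_incl_surj HC).
Qed.
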